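(* Let $g\sim\mathcal N(0,1)$ and, for nonnegative integers $a,b$, let $I(a,b)=\mathbb E[(g^2-1)^ag^{2b}]$. Then: (i) $I(0,0)=1$, $I(1,0)=0$ and $I(0,b)=(2b-1)!!$. Moreover $I(a,0)=2(a-1)\bigl(I(a-1,0)+I(a-2,0)\bigr)$ for $a\ge2$, and $I(a,b)=2a\,I(a-1,b)+(2b-1)\,I(a,b-1)$ for $a\ge1$, $b\ge1$. (ii) If either $b=0$ and $a\ge2$, or $b\ge1$ and $a\ge0$, then $\mathbb E[g^{2a+2b}]\le2^a\,\mathbb E[(g^2-1)^ag^{2b}]$. *)

From HB Require Import structures.
From mathcomp Require Import all_boot all_order all_algebra.
From mathcomp Require Import all_classical all_reals all_analysis.
Set Implicit Arguments. Unset Strict Implicit. Unset Printing Implicit Defensive.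
Import Order.TTheory GRing.Theory Num.Theory.
Local Open Scope ring_scope.
Local Open Scope ereal_scope.

Fixpoint dfact (n : nat) : nat :=
  match n with
  | 0 | 1 => 1
  | (m.+2) as k => (k * dfact m)%N
  end.

Definition gauss_E {R : realType} (f : R -> R) : \bar R :=
  \int[normal_prob (0:R) 1]_x (f x)%:E.

Definition Iab {R : realType} (a b : nat) : \bar R :=
  gauss_E (fun x : R => ((x ^+ 2 - 1) ^+ a * x ^+ (2 * b))%R).

From mathcomp Require Import all_boot all_order all_algebra.
From mathcomp Require Import all_classical all_reals all_analysis.
From mathcomp Require Import measurable_realfun ring lra zify.
Set Implicit Arguments. Unset Strict Implicit. Unset Printing Implicit Defensive.
Import Order.TTheory GRing.Theory Num.Theory numFieldTopology.Exports.
Local Open Scope classical_set_scope.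
Local Open Scope ring_scope.

(* Write phi for the standard normal density, so that x phi(x) = -phi'(x).
   Integrating x^(2k+1) against x phi(x) by parts on [0, b] and letting b go to
   infinity gives E[g^(2k+2)] = (2k+1) E[g^(2k)], hence E[g^(2k)] = (2k-1)!!.
   Since (g^2-1)^(a+1) g^(2b) = (g^2-1)^a g^(2b+2) - (g^2-1)^a g^(2b), the numbers
   I(a,b) are iterated forward differences of the moment sequence, and both parts
   of the theorem become statements about these integers: the recurrences
   follow by induction on a, and the inequality by induction on a + b from the
   recurrences, I(1,0) = 0 being the only exception. *)

Section gauss_moment_recurrences.
Context {R : realDomainType}.

Definition gauss_moment k : R := (dfact (2 * k).-1)%:R.

Lemma gauss_moment_ge0 k : 0 <= gauss_moment k.
Proof. exact: ler0n. Qed.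

Lemma gauss_momentS k : gauss_moment k.+1 = (2 * k).+1%:R * gauss_moment k.
Proof.
rewrite /gauss_moment -natrM; congr _%:R.
by case: k => [|k] //; rewrite !mulnS.
Qed.

Fixpoint Iabr (a b : nat) : R :=
  if a is a'.+1 then Iabr a' b.+1 - Iabr a' b else gauss_moment b.

Lemma IabrS a b : Iabr a.+1 b = Iabr a b.+1 - Iabr a b.
Proof. by []. Qed.

Lemma Iabr10 : Iabr 1 0 = 0.
Proof. by rewrite /= gauss_momentS mul1r subrr. Qed.

Lemma Iabr_recS a b :
  Iabr a.+1 b.+1 = (2 * a.+1)%:R * Iabr a b.+1 + (2 * b).+1%:R * Iabr a.+1 b.
Proof.
elim: a b => [|a IHa] b.
  by rewrite /= [gauss_moment b.+2]gauss_momentS [gauss_moment b.+1]gauss_momentS; ring.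
have E : Iabr a b.+2 = Iabr a b.+1 + Iabr a.+1 b.+1 by rewrite /= addrC subrK.
rewrite [Iabr a.+2 b.+1]IabrS [Iabr a.+2 b]IabrS (IHa b.+1) E (IHa b).
ring.
Qed.

Lemma Iabr_rec0 a : Iabr a.+2 0 = (2 * a.+1)%:R * (Iabr a.+1 0 + Iabr a 0).
Proof.
have -> : Iabr a.+1 0 + Iabr a 0 = Iabr a 1 by rewrite /= subrK.
by rewrite [LHS]IabrS Iabr_recS muln0 mul1r addrK.
Qed.

Lemma gauss_moment_le_Iabr a b : (a, b) != (1, 0)%N ->
  gauss_moment (a + b) <= 2 ^+ a * Iabr a b.
Proof.
have [n] := ubnP (a + b); elim: n a b => // n IHn a b ltabn ab.
have nat_ge0 k : 0 <= k%:R :> R by exact: ler0n.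
case: a b ltabn ab => [|a] [|b] ltabn ab; try by rewrite expr0 mul1r.
  case: a ltabn ab => [//|a] ltabn _.
  have IHa1 : gauss_moment a.+1 <= 2 ^+ a * Iabr a 1.
    by rewrite -addn1; apply: IHn; rewrite ?xpair_eqE; lia.
  have := gauss_moment_ge0 a.+1; have := nat_ge0 a.
  rewrite addn0 Iabr_rec0 [gauss_moment a.+2]gauss_momentS !exprS.
  have -> : Iabr a.+1 0 + Iabr a 0 = Iabr a 1 by rewrite IabrS subrK.
  nra.
have IH1 : gauss_moment (a + b).+1 <= 2 ^+ a * Iabr a b.+1.
  by rewrite -addnS; apply: IHn; rewrite ?xpair_eqE; lia.
rewrite Iabr_recS addnS gauss_momentS.
(* at (a, b) = (0, 0) the second term involves I(1,0) = 0, not covered by IHn *)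
have [[-> ->]|ab'] := eqVneq (a, b) (0, 0)%N.
  by rewrite Iabr10 /= !gauss_momentS /gauss_moment /=; lra.
have IH2 : gauss_moment (a + b).+1 <= 2 ^+ a.+1 * Iabr a.+1 b.
  by rewrite -addSn; apply: IHn; move: ab'; rewrite ?xpair_eqE; lia.
have := gauss_moment_ge0 (a + b).+1; have := nat_ge0 a; have := nat_ge0 b.
rewrite addSn exprS in IH2 *.
nra.
Qed.

End gauss_moment_recurrences.

Section std_normal_pdf.
Context {R : realType}.
Local Notation mu := (@lebesgue_measure R).
Local Notation phi := (@normal_pdf R 0 1).

Lemma std_normal_pdfE x : phi x = normal_peak 1 * expR (- x ^+ 2 / 2).
Proof. by rewrite /normal_pdf oner_eq0 /normal_fun subr0 expr1n. Qed.

Lemma std_normal_pdfN x : phi (- x) = phi x.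
Proof. by rewrite !std_normal_pdfE sqrrN. Qed.

Lemma is_derive_std_normal_pdf (x : R) : is_derive x (1 : R) phi (- x * phi x).
Proof.
have -> : phi = normal_peak 1 *: (expR \o (fun y => - y ^+ 2 / 2)).
  by apply/funext => y; rewrite std_normal_pdfE.
have dE : is_derive x (1 : R) (fun y : R => - y ^+ 2 / 2) (- x).
  apply: is_derive_eq; rewrite !scaler0 add0r.
  by change (2^-1 * - (x * 1 + x * 1) = - x); lra.
apply: is_derive_eq.
by change (normal_peak 1 * (expR (- x ^+ 2 / 2) * - x) =
           - x * (normal_peak 1 * expR (- x ^+ 2 / 2))); ring.
Qed.

Lemma continuous_monomial_std_normal_pdf n :
  continuous (fun x : R => x ^+ n * phi x).
Proof.
by move=> x; apply: cvgM; [exact: exprn_continuous | exact: continuous_normal_pdf].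
Qed.

Lemma Rintegral_monomial_std_normal_pdf_recr n (b : R) : 0 < b ->
  \int[mu]_(x in `[0, b]) (x ^+ n.+2 * phi x) =
  n.+1%:R * \int[mu]_(x in `[0, b]) (x ^+ n * phi x) - b ^+ n.+1 * phi b.
Proof.
move=> b_gt0.
have derivable_LR (F : R -> R) : (forall x, derivable F x 1) ->
    derivable_oo_LRcontinuous F 0 b.
  move=> dF; have cF : continuous F.
    by move=> x; apply/differentiable_continuous/derivable1_diffP.
  by split => [x _||]; [exact: dF | exact/cvg_at_right_filter/cF |
                        exact/cvg_at_left_filter/cF].
have dpsi (x : R) : is_derive x (1 : R) (fun y => - phi y) (x * phi x).
  apply: is_derive_eq; first exact: is_deriveN (is_derive_std_normal_pdf x).
  by rewrite mulNr opprK.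
under eq_Rintegral do rewrite exprSr -mulrA.
have := @Rintegration_by_parts R (fun y => y ^+ n.+1) (fun y => - phi y)
  (fun y => n.+1%:R * y ^+ n) (fun y => y * phi y) 0 b b_gt0.
rewrite expr0n /= mul0r subr0 => ->.
- under eq_Rintegral do rewrite -mulrA !mulrN -mulNr.
  rewrite RintegralZl//; first by rewrite mulrN mulNr opprK addrC.
  apply: continuous_compact_integrable; first exact: segment_compact.
  exact/continuous_subspaceT/continuous_monomial_std_normal_pdf.
- apply/continuous_subspaceT => x; apply: cvgM; first exact: cvg_cst.
  exact: exprn_continuous.
- by apply: derivable_LR => x; exact: exprn_derivable.
- by move=> x _; rewrite exp_derive1.
- apply/continuous_subspaceT => x; apply: cvgM; first exact: cvg_id.
  exact: continuous_normal_pdf.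
- by apply: derivable_LR => x; case: (dpsi x).
- by move=> x _; rewrite derive1E derive_val.
Qed.

Lemma odd_monomial_std_normal_pdf_le k (b : R) : 0 < b ->
  b ^+ (2 * k).+1 * phi b <= normal_peak 1 * k.+1`!%:R * 2 ^+ k.+1 / b.
Proof.
move=> b_gt0; rewrite std_normal_pdfE mulNr expRN.
set X := b ^+ 2 / 2.
have X_gt0 : 0 < X by rewrite divr_gt0 ?exprn_gt0.
have fact_pos : 0 < k.+1`!%:R :> R by rewrite ltr0n fact_gt0.
have XV_gt0 : 0 < X ^+ k.+1 / k.+1`!%:R by rewrite divr_gt0 ?exprn_gt0.
have expR_ge : X ^+ k.+1 / k.+1`!%:R <= expR X.
  by have := expR_ge1Dxn k (ltW X_gt0); lra.
apply: (@le_trans _ _ (b ^+ (2 * k).+1 * (normal_peak 1 * (X ^+ k.+1 / k.+1`!%:R)^-1))).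
  apply: ler_wpM2l; first by rewrite exprn_ge0 ?ltW.
  apply: ler_wpM2l; first exact: normal_peak_ge0.
  by rewrite lef_pV2 ?posrE// (lt_le_trans XV_gt0 expR_ge).
have -> : X ^+ k.+1 = b ^+ (2 * k).+1 * b / 2 ^+ k.+1.
  by rewrite /X exprMn exprVn -exprM -exprSr mulnSr addn2.
rewrite le_eqVlt; apply/orP; left; apply/eqP; field.
by rewrite !gt_eqF ?exprn_gt0.
Qed.

Lemma cvg_odd_monomial_std_normal_pdf k :
  (fun n : nat => n.+1%:R ^+ (2 * k).+1 * phi n.+1%:R) @ \oo --> (0 : R).
Proof.
pose C : R := normal_peak 1 * k.+1`!%:R * 2 ^+ k.+1.
apply: (@squeeze_cvgr _ _ _ _ (cst 0) (fun n => C * harmonic n)).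
- apply: nearW => n; rewrite mulr_ge0 ?exprn_ge0 ?normal_pdf_ge0//=.
  exact: odd_monomial_std_normal_pdf_le.
- exact: cvg_cst.
- by rewrite -(mulr0 C); apply: cvgM; [exact: cvg_cst | exact: cvg_harmonic].
Qed.

End std_normal_pdf.

Section std_normal_moments.
Context {R : realType}.
Local Notation mu := (@lebesgue_measure R).
Local Notation phi := (@normal_pdf R 0 1).
Local Open Scope ereal_scope.

Lemma even_pow_ge0 k (x : R) : (0 <= x ^+ (2 * k))%R.
Proof. by rewrite exprn_even_ge0 // oddM. Qed.

Let even_monomial_pdf_ge0 k (x : R) : (0 <= x ^+ (2 * k) * phi x)%R.
Proof. by rewrite mulr_ge0 ?even_pow_ge0 ?normal_pdf_ge0. Qed.

Let half_moment k := \int[mu]_(x in `[0%R, +oo[) (x ^+ (2 * k) * phi x)%:E.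

Let cvg_half_moment k :
  (\int[mu]_(x in `[0%R, n.+1%:R]) (x ^+ (2 * k) * phi x))%:E @[n --> \oo]
  --> half_moment k.
Proof.
have EFin_Rintegral (b : R) : (\int[mu]_(x in `[0%R, b]) (x ^+ (2 * k) * phi x))%:E =
    \int[mu]_(x in `[0%R, b]) (x ^+ (2 * k) * phi x)%:E.
  rewrite /Rintegral fineK //; apply: integrable_fin_num => //.
  apply: continuous_compact_integrable; first exact: segment_compact.
  exact/continuous_subspaceT/continuous_monomial_std_normal_pdf.
under eq_fun do rewrite EFin_Rintegral.
have := @ge0_cvgn_integral R mu _ (even_monomial_pdf_ge0 k)
  (continuous_measurable_fun (@continuous_monomial_std_normal_pdf R (2 * k))).
by rewrite -cvg_shiftS.
Qed.

Let half_momentS k (r : R) : half_moment k = r%:E ->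
  half_moment k.+1 = ((2 * k).+1%:R * r)%:E.
Proof.
move=> hk; have := @cvg_half_moment k; rewrite hk => /fine_cvg /= hr.
suff : (\int[mu]_(x in `[0%R, n.+1%:R]) (x ^+ (2 * k.+1) * phi x))%:E @[n --> \oo]
    --> ((2 * k).+1%:R * r)%:E.
  exact: cvg_unique (@cvg_half_moment k.+1).
apply: cvg_EFin; first exact: nearW.
under eq_fun do rewrite mulnS add2n Rintegral_monomial_std_normal_pdf_recr //.
rewrite -[(_ * r)%R]subr0; apply: cvgB; last exact: cvg_odd_monomial_std_normal_pdf.
by apply: cvgM => //; exact: cvg_cst.
Qed.

Lemma integral_even_monomial_std_normal_pdf k :
  \int[mu]_x (x ^+ (2 * k) * phi x)%:E = (gauss_moment k)%:E.
Proof.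
have full_half j : \int[mu]_x (x ^+ (2 * j) * phi x)%:E = 2%:E * half_moment j.
  rewrite ge0_symfun_integralT //.
  - by rewrite /half_moment set_itvcy.
  - exact: continuous_monomial_std_normal_pdf.
  - by move=> x /=; rewrite std_normal_pdfN !exprM sqrrN.
rewrite full_half; suff -> : half_moment k = (gauss_moment k / 2)%:E.
  by rewrite -EFinM mulrC divfK ?pnatr_eq0.
elim: k => [|k IHk].
  have half2 : 2%:E * half_moment 0 = 1.
    rewrite -full_half -(integral_normal_pdf 0 1).
    by apply: eq_integral => x _; rewrite muln0 expr0 mul1r.
  have -> : half_moment 0 = 2^-1%:E * (2%:E * half_moment 0).
    by rewrite muleA -EFinM mulVf ?pnatr_eq0 // mul1e.
  by rewrite half2 mule1 /gauss_moment /= mul1r.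
by rewrite (half_momentS IHk) gauss_momentS mulrA.
Qed.

End std_normal_moments.

Section normal_prob_integral.
Context {R : realType}.
Local Notation mu := (@lebesgue_measure R).
Local Open Scope ereal_scope.

Lemma integral_normal_prob (m s : R) (f : R -> R) :
  (forall x, 0 <= f x)%R -> measurable_fun setT f ->
  \int[normal_prob m s]_x (f x)%:E = \int[mu]_x (f x * normal_pdf m s x)%:E.
Proof.
move=> f_ge0 mf.
have dom := @normal_prob_dominates R m s.
rewrite -(Radon_Nikodym_SigmaFinite.change_of_variables dom) //; last first.
  exact/measurable_EFinP.
under [RHS]eq_integral do rewrite EFinM.
have mpdf : measurable_fun setT (EFin \o normal_pdf m s).
  by apply/measurable_EFinP; exact: measurable_normal_pdf.
apply: ae_eq_integral => //.
- apply: emeasurable_funM; first exact/measurable_EFinP.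
  exact: measurable_int (Radon_Nikodym_SigmaFinite.f_integrable dom).
- by apply: emeasurable_funM => //; exact/measurable_EFinP.
- have : ae_eq mu setT (Radon_Nikodym_SigmaFinite.f (normal_prob m s) mu)
      (EFin \o normal_pdf m s).
    apply: integral_ae_eq => //; first exact: Radon_Nikodym_SigmaFinite.f_integrable.
    by move=> E _ mE; rewrite -Radon_Nikodym_SigmaFinite.f_integral.
  by apply: filterS => x /= /[apply] ->.
Qed.

End normal_prob_integral.

Section gauss_expectations.
Context {R : realType}.
Local Notation P := (@normal_prob R 0 1).
Local Open Scope ereal_scope.

Lemma gauss_E_even_pow k : gauss_E (fun x : R => x ^+ (2 * k))%R = (gauss_moment k)%:E.
Proof.
rewrite /gauss_E integral_normal_prob; first exact: integral_even_monomial_std_normal_pdf.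
- exact: even_pow_ge0.
- by apply: continuous_measurable_fun; exact: exprn_continuous.
Qed.

Lemma integrable_even_pow k : P.-integrable setT (fun x : R => (x ^+ (2 * k))%R%:E).
Proof.
apply/integrableP; split.
  by apply/measurable_EFinP; apply: continuous_measurable_fun; exact: exprn_continuous.
under eq_integral do rewrite gee0_abs ?lee_fin ?even_pow_ge0 //.
by have := gauss_E_even_pow k; rewrite /gauss_E => ->; rewrite ltry.
Qed.

Let Iab_integrandS a b (x : R) :
  ((x ^+ 2 - 1) ^+ a.+1 * x ^+ (2 * b) =
   (x ^+ 2 - 1) ^+ a * x ^+ (2 * b.+1) - (x ^+ 2 - 1) ^+ a * x ^+ (2 * b))%R.
Proof. by rewrite exprS mulnS exprD; ring. Qed.

Lemma integrable_Iab a b :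
  P.-integrable setT (fun x : R => ((x ^+ 2 - 1) ^+ a * x ^+ (2 * b))%:E).
Proof.
elim: a b => [|a IHa] b.
  by under eq_fun do rewrite expr0 mul1r; exact: integrable_even_pow.
under eq_fun do rewrite Iab_integrandS EFinB.
exact: integrableB.
Qed.

Lemma IabS a b : @Iab R a.+1 b = Iab a b.+1 - Iab a b.
Proof.
rewrite /Iab /gauss_E -integralB_EFin ?integrable_Iab //.
by apply: eq_integral => x _; rewrite Iab_integrandS.
Qed.

Lemma IabE a b : @Iab R a b = (Iabr a b)%:E.
Proof.
elim: a b => [|a IHa] b.
  by rewrite /Iab; under eq_fun do rewrite expr0 mul1r; exact: gauss_E_even_pow.
by rewrite IabS !IHa.
Qed.

End gauss_expectations.

Local Open Scope ereal_scope.

Theorem lemmaC1 (R : realType) :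
  (* (i) *)
  (@Iab R 0 0 = 1 /\
   @Iab R 1 0 = 0 /\
   (forall b : nat, @Iab R 0 b = ((dfact (2 * b).-1)%:R)%:E) /\
   (forall a : nat, (2 <= a)%N ->
      @Iab R a 0 = ((2 * (a - 1))%:R)%:E * (@Iab R (a - 1) 0 + @Iab R (a - 2) 0)) /\
   (forall a b : nat, (1 <= a)%N -> (1 <= b)%N ->
      @Iab R a b = ((2 * a)%:R)%:E * @Iab R (a - 1) b
                   + (((2 * b).-1)%:R)%:E * @Iab R a (b - 1))) /\
  (* (ii) *)
  (forall a b : nat, ((b == 0%N) && (2 <= a)%N) || (1 <= b)%N ->
     gauss_E (fun x : R => (x ^+ (2 * a + 2 * b))%R) <= ((2 ^ a)%:R)%:E * @Iab R a b).
Proof.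
split; [split; [|split; [|split; [|split]]]|].
- by rewrite IabE.
- by rewrite IabE Iabr10.
- by move=> b; rewrite IabE.
- by case=> [|[|a]] // _; rewrite !IabE Iabr_rec0 EFinM EFinD subn1 subn2.
- by case=> [|a] [|b] // _ _; rewrite !IabE Iabr_recS EFinD !EFinM !subn1 !mulnS.
- move=> a b ab; rewrite -mulnDr gauss_E_even_pow IabE -EFinM lee_fin natrX.
  by apply: gauss_moment_le_Iabr; apply: contraTneq ab => -[-> ->].
Qed.
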